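(* In the deductive system $NOM$, for all finite sequences of formulas $\Gamma$ and all formulas $\phi,\psi$, the following two rules of inference are derivable: from $\Gamma \vdash \phi \rightarrow \psi$ infer $\Gamma \vdash \neg(\phi \wedge \neg(\phi \wedge \psi))$; and from $\Gamma \vdash \neg(\phi \wedge \neg(\phi \wedge \psi))$ infer $\Gamma \vdash \phi \rightarrow \psi$.
   Context: The propositional deductive system $NOM$: formulas are built from propositional letters using the binary connectives $\wedge$, $\rightarrow$ and the unary connective $\neg$. A sequent is an expression $\phi_1,\ldots,\phi_n \vdash \psi$ with $n\ge 0$, whose antecedent is a finite sequence (order matters, repetitions allowed) of formulas. Below $\Gamma$ denotes a finite, possibly empty, sequence of formulas, $\phi,\psi,\chi$ formulas, and commas denote concatenation. A sequent is derivable in $NOM$ if it can be obtained with the following rules (premises $\Rightarrow$ conclusion): (assumption) $\Gamma,\phi\vdash\phi$, no premises; (cut) $\Gamma\vdash\phi$ and $\Gamma,\phi\vdash\psi$ $\Rightarrow$ $\Gamma\vdash\psi$; (paste) $\Gamma\vdash\phi$ and $\Gamma\vdash\psi$ $\Rightarrow$ $\Gamma,\phi\vdash\psi$; (compatible exchange) $\Gamma,\phi,\psi\vdash\phi$ and $\Gamma,\phi,\psi\vdash\chi$ and $\Gamma,\psi,\phi\vdash\psi$ $\Rightarrow$ $\Gamma,\psi,\phi\vdash\chi$; ($\wedge$-introduction) $\Gamma\vdash\phi$ and $\Gamma\vdash\psi$ $\Rightarrow$ $\Gamma\vdash\phi\wedge\psi$; ($\wedge$-elimination) $\Gamma\vdash\phi\wedge\psi$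 $\Rightarrow$ $\Gamma\vdash\phi$, and $\Gamma\vdash\phi\wedge\psi$ $\Rightarrow$ $\Gamma\vdash\psi$; ($\rightarrow$-introduction) $\Gamma,\phi\vdash\psi$ $\Rightarrow$ $\Gamma\vdash\phi\rightarrow\psi$; ($\rightarrow$-elimination) $\Gamma\vdash\phi\rightarrow\psi$ $\Rightarrow$ $\Gamma,\phi\vdash\psi$; (excluded middle) $\Gamma,\phi\vdash\psi$ and $\Gamma,\neg\phi\vdash\psi$ $\Rightarrow$ $\Gamma\vdash\psi$; (deductive explosion) $\Gamma\vdash\neg\phi$ $\Rightarrow$ $\Gamma,\phi\vdash\psi$. A rule schema is derivable if in every instance its conclusion can be derived from its premises using these rules. *)

From Stdlib Require Import List.
Import ListNotations.

Inductive formula : Type :=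
| Var : nat -> formula
| And : formula -> formula -> formula
| Imp : formula -> formula -> formula
| Neg : formula -> formula.

Record sequent : Type := Seq { ante : list formula; succ : formula }.

(* Derivability in NOM from a set H of additional premise sequents
   (H = fun _ => False gives plain derivability).  Commas are list
   concatenation: "Gamma, phi" is Gamma ++ [phi]. *)
Inductive NOM_from (H : sequent -> Prop) : sequent -> Prop :=
| nom_hyp : forall s, H s -> NOM_from H s
| nom_assumption : forall G p, NOM_from H (Seq (G ++ [p]) p)
| nom_cut : forall G p q,
    NOM_from H (Seq G p) -> NOM_from H (Seq (G ++ [p]) q) ->
    NOM_from H (Seq G q)
| nom_paste : forall G p q,
    NOM_from H (Seq G p) -> NOM_from H (Seq G q) ->
    NOM_from H (Seq (G ++ [p]) q)
| nom_cexch : forall G p q r,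
    NOM_from H (Seq (G ++ [p; q]) p) ->
    NOM_from H (Seq (G ++ [p; q]) r) ->
    NOM_from H (Seq (G ++ [q; p]) q) ->
    NOM_from H (Seq (G ++ [q; p]) r)
| nom_andI : forall G p q,
    NOM_from H (Seq G p) -> NOM_from H (Seq G q) ->
    NOM_from H (Seq G (And p q))
| nom_andE1 : forall G p q,
    NOM_from H (Seq G (And p q)) -> NOM_from H (Seq G p)
| nom_andE2 : forall G p q,
    NOM_from H (Seq G (And p q)) -> NOM_from H (Seq G q)
| nom_impI : forall G p q,
    NOM_from H (Seq (G ++ [p]) q) -> NOM_from H (Seq G (Imp p q))
| nom_impE : forall G p q,
    NOM_from H (Seq G (Imp p q)) -> NOM_from H (Seq (G ++ [p]) q)
| nom_em : forall G p q,
    NOM_from H (Seq (G ++ [p]) q) -> NOM_from H (Seq (G ++ [Neg p]) q) ->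
    NOM_from H (Seq G q)
| nom_explosion : forall G p q,
    NOM_from H (Seq G (Neg p)) -> NOM_from H (Seq (G ++ [p]) q).

Definition derivable_rule1 (premise conclusion : sequent) : Prop :=
  NOM_from (fun s => s = premise) conclusion.

(* NOM has no weakening, so hypotheses cannot simply be carried along; the
   substitute is compatible exchange, which lets a formula [X] be moved in
   front of the last hypothesis [Y] as long as [X] is still derivable
   afterwards.  With it, an explosive context (one deriving everything)
   stays explosive when a component [p] of a conjunctive hypothesis is
   inserted, and a negated hypothesis survives such an insertion.  For the
   first rule, [Gamma, p /\ ~(p /\ q)] is explosive: unpacking the
   conjunction gives [Gamma, p, ~(p /\ q)], where [p /\ q] is derivable
   from [p -> q], so excluded middle yields the negation.  For the second,
   split on [p /\ q]: the positive case is immediate, and in the negative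
   case with [p] the context rebuilds [p /\ ~(p /\ q)], whose negation
   makes everything derivable. *)
From Stdlib Require Import List.
Import ListNotations.

Section NOMDerivedRules.

Variable H : sequent -> Prop.

Local Notation "G ⊢ p" := (NOM_from H (Seq G p)) (at level 70).

Definition explosive (G : list formula) : Prop := forall r, G ⊢ r.

Lemma nom_cexch_snoc G X Y r :
  (G ++ [X]) ++ [Y] ⊢ X -> (G ++ [X]) ++ [Y] ⊢ r ->
  (G ++ [Y]) ++ [X] ⊢ Y -> (G ++ [Y]) ++ [X] ⊢ r.
Proof. rewrite <- !app_assoc; apply nom_cexch. Qed.

Lemma last_andE1 G p q : G ++ [And p q] ⊢ p.
Proof. apply nom_andE1 with q; apply nom_assumption. Qed.

Lemma last_andE2 G p q : G ++ [And p q] ⊢ q.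
Proof. apply nom_andE2 with p; apply nom_assumption. Qed.

Lemma explosive_paste G p : explosive G -> explosive (G ++ [p]).
Proof. intros expl r; apply nom_paste; apply expl. Qed.

Lemma explosive_insert G X Y :
  explosive (G ++ [Y]) -> (G ++ [X]) ++ [Y] ⊢ X ->
  explosive ((G ++ [X]) ++ [Y]).
Proof.
  intros expl hX r.
  apply nom_cexch_snoc; [apply explosive_paste; exact expl ..| exact hX].
Qed.

Lemma neg_of_explosive G p : explosive (G ++ [p]) -> G ⊢ Neg p.
Proof. intro expl; apply nom_em with p; [apply expl | apply nom_assumption]. Qed.

Lemma cut_before_last G X Y r :
  G ++ [X] ⊢ Y -> (G ++ [Y]) ++ [X] ⊢ Y -> (G ++ [Y]) ++ [X] ⊢ r ->
  G ++ [X] ⊢ r.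
Proof.
  intros hY hYX hr.
  apply nom_cut with Y; [exact hY |].
  apply nom_cexch_snoc; [exact hYX | exact hr |].
  apply nom_paste; [exact hY | apply nom_assumption].
Qed.

Lemma nom_dne G p : G ⊢ Neg (Neg p) -> G ⊢ p.
Proof.
  intro hnn; apply nom_em with p; [apply nom_assumption |].
  apply nom_explosion; exact hnn.
Qed.

Lemma nom_imp_dni G p : G ⊢ Imp p (Neg (Neg p)).
Proof.
  apply nom_em with (Neg (Neg p)).
  - apply nom_impI, nom_paste; [apply nom_dne | ]; apply nom_assumption.
  - apply nom_cut with (Neg p); [apply nom_dne, nom_assumption |].
    apply nom_impI, nom_explosion, nom_assumption.
Qed.

Lemma nom_dni G p : G ⊢ p -> G ⊢ Neg (Neg p).
Proof.
  intro hp; apply nom_cut with p; [exact hp |].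
  apply nom_impE, nom_imp_dni.
Qed.

Lemma explosive_snoc_neg G p : G ⊢ p -> explosive (G ++ [Neg p]).
Proof. intros hp r; apply nom_explosion, nom_dni; exact hp. Qed.

Lemma neg_hyp_persists G X B :
  ((G ++ [Neg B]) ++ [X]) ++ [B] ⊢ X -> (G ++ [Neg B]) ++ [X] ⊢ Neg B.
Proof.
  intro hX; apply nom_em with B; [| apply nom_assumption].
  apply explosive_insert; [intro r; apply nom_explosion, nom_assumption | exact hX].
Qed.

Lemma neg_and_neg_of_imp G p q :
  G ⊢ Imp p q -> G ⊢ Neg (And p (Neg (And p q))).
Proof.
  intro hpq; apply neg_of_explosive; intro r.
  apply cut_before_last with p; [apply last_andE1 .. |].
  apply cut_before_last with (Neg (And p q)); [apply last_andE2 .. |].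
  apply explosive_paste, explosive_snoc_neg, nom_andI.
  - apply nom_assumption.
  - apply nom_impE; exact hpq.
Qed.

Lemma imp_of_neg_and_neg G p q :
  G ⊢ Neg (And p (Neg (And p q))) -> G ⊢ Imp p q.
Proof.
  intro hneg; apply nom_em with (And p q).
  - apply nom_impI, nom_paste; [apply last_andE1 | apply last_andE2].
  - apply nom_em with p.
    + set (A := And p (Neg (And p q))).
      assert (expl_nA : explosive ((G ++ [Neg (And p q)]) ++ [A])).
      { apply explosive_insert; [intro r; apply nom_explosion, hneg | apply last_andE2]. }
      assert (expl_npA : explosive (((G ++ [Neg (And p q)]) ++ [p]) ++ [A])).
      { apply explosive_insert; [exact expl_nA | apply last_andE1]. }
      apply nom_cut with A; [| apply expl_npA].
      apply nom_andI; [apply nom_assumption |].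
      apply neg_hyp_persists, last_andE1.
    + apply nom_impI, nom_explosion, nom_assumption.
Qed.

End NOMDerivedRules.

Theorem theorem2p10 :
  forall (G : list formula) (p q : formula),
    derivable_rule1 (Seq G (Imp p q)) (Seq G (Neg (And p (Neg (And p q)))))
    /\ derivable_rule1 (Seq G (Neg (And p (Neg (And p q))))) (Seq G (Imp p q)).
Proof.
  intros G p q; unfold derivable_rule1; split.
  - apply neg_and_neg_of_imp, nom_hyp; reflexivity.
  - apply imp_of_neg_and_neg, nom_hyp; reflexivity.
Qed.
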